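(* Let $n\ge1$, $0<\epsilon\le1$, $0\le\tau<1$, and let $G=(V,E)$ be a comparison graph with $|E|\ge1$. Let $P$ be a distribution on $[n]$ with $\|P-U_n\|\ge\epsilon$ and $|E|(\mu_P-\mu_P^2)< c(G)(\gamma_P-\mu_P^2)$. If $c(G)\le \dfrac{|E|^2(1-\tau)^2\epsilon^2}{16\sqrt n}$, then the collision-based algorithm $(G,\tau)$ outputs YES on $P$ with probability at most $1/4$.
   Context: $U_n$ is the uniform distribution on $[n]$; $\|P-Q\|=\sum_i|P_i-Q_i|$. $\mu_P=\sum_iP_i^2$, $\gamma_P=\sum_iP_i^3$. A comparison graph is a finite simple undirected graph $G=(V,E)$; $c(G)$ is the number of ordered triples $(u,v,w)$ of distinct vertices with $\{u,v\},\{v,w\}\in E$. Given $P$, each vertex $v$ receives an independent sample $S(v)\sim P$; for $e=\{u,v\}\in E$, $\mathbf 1_e=\mathbf 1[S(u)=S(v)]$; $Z=\sum_{e\in E}\mathbf 1_e$ and $T=|E|\frac{1+\tau\epsilon^2}{n}$; the algorithm $(G,\tau)$ outputs YES if $Z<T$ and NO otherwise. *)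

From mathcomp Require Import all_boot all_order all_algebra.
From mathcomp Require Import reals.
Set Implicit Arguments. Unset Strict Implicit. Unset Printing Implicit Defensive.
Import Order.TTheory GRing.Theory Num.Theory.
Local Open Scope ring_scope.

Section Defs.
Variable R : realType.

Definition simple_graph (V : finType) (e : rel V) : Prop :=
  irreflexive e /\ symmetric e.

Definition edges (V : finType) (e : rel V) : {set {set V}} :=
  [set A : {set V} | [exists u, exists v, e u v && (A == [set u; v])]].

Definition cG (V : finType) (e : rel V) : nat :=
  #|[set t : V * V * V | [&& t.1.1 != t.1.2, t.1.2 != t.2, t.1.1 != t.2,
                             e t.1.1 t.1.2 & e t.1.2 t.2]]|.

Definition is_distr (n : nat) (P : {ffun 'I_n -> R}) : Prop :=
  (forall i, 0 <= P i) /\ \sum_i P i = 1.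

Definition dist_unif (n : nat) (P : {ffun 'I_n -> R}) : R :=
  \sum_i `|P i - n%:R^-1|.

Definition muP (n : nat) (P : {ffun 'I_n -> R}) : R := \sum_i P i ^+ 2.
Definition gammaP (n : nat) (P : {ffun 'I_n -> R}) : R := \sum_i P i ^+ 3.

Definition collisions (V : finType) (e : rel V) (n : nat)
  (S : {ffun V -> 'I_n}) : nat :=
  #|[set A in edges e | [forall u in A, forall v in A, S u == S v]]|.

Definition threshold (V : finType) (e : rel V) (n : nat) (tau eps : R) : R :=
  #|edges e|%:R * (1 + tau * eps ^+ 2) / n%:R.

(* probability that the algorithm (G,tau) outputs YES (Z < T), where the
   samples S(v) are independent and P-distributed: product measure on
   assignments S : V -> [n]. *)
Definition prob_yes (V : finType) (e : rel V) (n : nat)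
  (P : {ffun 'I_n -> R}) (tau eps : R) : R :=
  \sum_(S : {ffun V -> 'I_n} | (collisions e S)%:R < threshold e n tau eps)
     \prod_v P (S v).

End Defs.

From mathcomp Require Import all_boot all_order all_algebra.
From mathcomp Require Import reals ring lra.
Set Implicit Arguments. Unset Strict Implicit. Unset Printing Implicit Defensive.
Import Order.TTheory GRing.Theory Num.Theory.
Local Open Scope ring_scope.

(* Collision indicators of one,
   two sharing a vertex, or two disjoint vertex pairs have expectations
   mu_P, gamma_P and mu_P^2, which gives the covariance of two edge
   indicators according to their overlap.  Summing over pairs of edges, with
   the graph identities 2|E| = #{adjacent ordered pairs} and
   c(G) = #{paths a-b-c, a <> c}, yields
       E[Z] = |E| mu_P,   E[(Z - |E| mu_P)^2] = |E|(mu_P - mu_P^2) + c(G)(gamma_P - mu_P^2).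
   Writing del = sum_i (P_i - 1/n)^2, we have mu_P = 1/n + del,
   gamma_P - mu_P^2 <= del (1/n + sqrt del) and eps^2 <= ||P - U_n||^2 <= n del.
   Hence E[Z] exceeds the threshold T by at least |E|(1 - tau) del, while the
   hypotheses on c(G) bound the mean square deviation by a quarter of the
   square of that gap; Chebyshev's inequality concludes. *)

Section ProductMeasure.
Variables (R : realType) (V : finType) (n : nat) (P : {ffun 'I_n -> R}).

Definition weight (S : {ffun V -> 'I_n}) : R := \prod_v P (S v).

Definition expect (F : {ffun V -> 'I_n} -> R) : R := \sum_S weight S * F S.

Lemma eq_expect F G : F =1 G -> expect F = expect G.
Proof. by move=> FG; apply: eq_bigr => S _; rewrite FG. Qed.

Lemma expectD F G : expect (fun S => F S + G S) = expect F + expect G.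
Proof. by rewrite /expect -big_split; apply: eq_bigr => S _; rewrite mulrDr. Qed.

Lemma expectZ c F : expect (fun S => c * F S) = c * expect F.
Proof. by rewrite /expect mulr_sumr; apply: eq_bigr => S _; rewrite mulrCA. Qed.

Lemma expect_sum (I : finType) (F : I -> {ffun V -> 'I_n} -> R) :
  expect (fun S => \sum_j F j S) = \sum_j expect (F j).
Proof. by rewrite /expect; under eq_bigr do rewrite mulr_sumr; rewrite exchange_big. Qed.

Lemma expect_prod (g : V -> 'I_n -> R) :
  expect (fun S => \prod_v g v (S v)) = \prod_v \sum_i P i * g v i.
Proof.
by rewrite bigA_distr_bigA /expect; apply: eq_bigr => S _; rewrite /weight -big_split.
Qed.

Hypothesis P_sum1 : \sum_i P i = 1.

(* The same for the coordinates listed in a duplicate-free sequence; the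
   others contribute a factor sum_i P i = 1. *)
Lemma expect_prod_seq (g : V -> 'I_n -> R) (s : seq V) : uniq s ->
  expect (fun S => \prod_(z <- s) g z (S z)) = \prod_(z <- s) \sum_i P i * g z i.
Proof.
move=> us.
have restrict (F : V -> R) : \prod_(z <- s) F z = \prod_z (if z \in s then F z else 1).
  by rewrite big_uniq // big_mkcond.
rewrite restrict.
transitivity (expect (fun S => \prod_v (fun z i => if z \in s then g z i else 1) v (S v))).
  by apply: eq_expect => S; rewrite restrict.
rewrite (expect_prod (fun z i => if z \in s then g z i else 1)); apply: eq_bigr => z _.
by case: (z \in s) => //; under eq_bigr do rewrite mulr1.
Qed.

Lemma expect_colouring (s : seq V) (c : V -> 'I_n) : uniq s ->
  expect (fun S => \prod_(z <- s) (S z == c z)%:R) = \prod_(z <- s) P (c z).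
Proof.
move=> us; rewrite (expect_prod_seq (fun z i => (i == c z)%:R)) //.
apply: eq_bigr => z _; rewrite (bigD1 (c z)) //= eqxx mulr1 big1 ?addr0 // => i /negbTE->.
by rewrite mulr0.
Qed.

Lemma expect_cst c : expect (fun _ => c) = c.
Proof.
rewrite /expect -mulr_suml /weight -(bigA_distr_bigA (fun _ i => P i)).
by rewrite big1 ?mul1r.
Qed.

Hypothesis P_ge0 : forall i, 0 <= P i.

Lemma weight_ge0 S : 0 <= weight S.
Proof. by apply: prodr_ge0 => v _. Qed.

Lemma chebyshev_lower_tail (X : {ffun V -> 'I_n} -> R) (m t : R) : t < m ->
  \sum_(S | X S < t) weight S <= expect (fun S => (X S - m) ^+ 2) / (m - t) ^+ 2.
Proof.
move=> tm; rewrite /expect mulr_suml big_mkcond /=; apply: ler_sum => S _.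
have w0 := weight_ge0 S; rewrite -mulrA.
case: ifP => XS; last by rewrite mulr_ge0 ?divr_ge0 ?sqr_ge0.
rewrite ler_peMr // ler_pdivlMr ?mul1r ?exprn_gt0 ?subr_gt0 //.
nra.
Qed.

End ProductMeasure.

Lemma sum_indicator (R : nzRingType) (T : finType) (a : T) (F : T -> R) :
  \sum_k (a == k)%:R * F k = F a.
Proof.
rewrite (bigD1 a) //= eqxx mul1r big1 ?addr0 // => k ka.
by rewrite eq_sym (negbTE ka) mul0r.
Qed.

Section CollisionMoments.
Variables (R : realType) (V : finType) (n : nat) (P : {ffun 'I_n -> R}).
Hypothesis P_sum1 : \sum_i P i = 1.
Local Notation expect := (@expect R V n P).

(* Collision probabilities: two distinct vertices collide with probability
   mu_P, three distinct vertices with probability gamma_P, and the collisions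
   of two disjoint pairs are independent. Each is obtained by splitting the
   collision event according to the common sample k. *)
Lemma expect_pair u v : u != v -> expect (fun S => (S u == S v)%:R) = muP P.
Proof.
move=> uv; transitivity (\sum_k expect (fun S => \prod_(z <- [:: u; v]) (S z == k)%:R)).
  rewrite -expect_sum; apply: eq_expect => S.
  under eq_bigr do rewrite !big_cons big_nil mulr1.
  by rewrite sum_indicator eq_sym.
apply: eq_bigr => k _; rewrite (expect_colouring P_sum1 (fun _ => k)) /= ?inE ?uv //.
by rewrite !big_cons big_nil mulr1 expr2.
Qed.

Lemma expect_path a b c : uniq [:: a; b; c] ->
  expect (fun S => (S a == S b)%:R * (S a == S c)%:R) = gammaP P.
Proof.
move=> abc; transitivity (\sum_k expect (fun S => \prod_(z <- [:: a; b; c]) (S z == k)%:R)).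
  rewrite -expect_sum; apply: eq_expect => S.
  under eq_bigr do rewrite !big_cons big_nil mulr1.
  by rewrite sum_indicator !(eq_sym (S a)).
apply: eq_bigr => k _; rewrite (expect_colouring P_sum1 (fun _ => k)) //.
by rewrite !big_cons big_nil mulr1 !exprS expr0 mulr1.
Qed.

Lemma expect_disjoint u v x y : uniq [:: u; v; x; y] ->
  expect (fun S => (S u == S v)%:R * (S x == S y)%:R) = muP P ^+ 2.
Proof.
move=> uvxy; have := uvxy; rewrite /= !inE !negb_or.
move=> /and4P[/and3P[_ ux uy] /andP[vx vy] _ _].
(* the pair {u, v} receives sample k and the pair {x, y} sample l *)
pose colour (k l : 'I_n) (z : V) : 'I_n := if z \in [:: u; v] then k else l.
have colour_uv k l : (colour k l u = k) * (colour k l v = k).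
  by rewrite /colour !inE !eqxx orbT.
have colour_xy k l : (colour k l x = l) * (colour k l y = l).
  rewrite /colour !inE !(eq_sym _ u) !(eq_sym _ v).
  by rewrite (negbTE ux) (negbTE uy) (negbTE vx) (negbTE vy).
transitivity (\sum_k \sum_l
  expect (fun S => \prod_(z <- [:: u; v; x; y]) (S z == colour k l z)%:R)).
  under eq_bigr do rewrite -expect_sum.
  rewrite -expect_sum; apply: eq_expect => S.
  under eq_bigr do under eq_bigr do
    rewrite !big_cons big_nil !colour_uv !colour_xy mulr1 mulrA.
  under eq_bigr do rewrite -mulr_sumr sum_indicator -mulrA.
  by rewrite sum_indicator (eq_sym (S v)) (eq_sym (S y)).
rewrite /muP expr2 mulr_suml; apply: eq_bigr => k _; rewrite mulr_sumr; apply: eq_bigr => l _.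
rewrite (expect_colouring P_sum1 (colour k l)) // !big_cons big_nil !colour_uv !colour_xy.
by rewrite mulr1 !expr2 !mulrA.
Qed.

(* [edge_cov u v x y] is the covariance of the collision indicators of the
   pairs {u,v} and {x,y}; it only depends on how the two pairs overlap. *)
Definition edge_cov (u v x y : V) : R :=
  expect (fun S => (S u == S v)%:R * (S x == S y)%:R) - muP P ^+ 2.

(* Evaluates the vertex comparisons decided by the disequalities in context. *)
Ltac rewrite_neqs := repeat match goal with
 | H : is_true (?a != ?b) |- context [?a == ?b] => rewrite (negbTE H)
 | H : is_true (?a != ?b) |- context [?b == ?a] => rewrite (eq_sym b a) (negbTE H)
 end; rewrite ?eqxx /=.

Lemma edge_cov_formula u v x y : u != v -> x != y ->
  edge_cov u v x y =
  (muP P - muP P ^+ 2) * ((x == u)%:R * (y == v)%:R + (x == v)%:R * (y == u)%:R)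
  + (gammaP P - muP P ^+ 2) * ((x == u)%:R * (y != v)%:R + (x == v)%:R * (y != u)%:R
                              + (y == u)%:R * (x != v)%:R + (y == v)%:R * (x != u)%:R).
Proof.
move=> uv xy; rewrite /edge_cov.
have sq (b : bool) : (b%:R * b%:R : R) = b%:R by rewrite -natrM mulnb andbb.
case: (eqVneq x u) => [Exu|xu]; first (subst x; case: (eqVneq y v) => [Eyv|yv]).
- subst y; rewrite (eq_expect _ (G := fun S => (S u == S v)%:R)); last by move=> S; rewrite sq.
  rewrite expect_pair //; rewrite_neqs; ring.
- rewrite expect_path; last by rewrite /= !inE !negb_or; rewrite_neqs.
  rewrite_neqs; ring.
case: (eqVneq x v) => [Exv|xv]; first (subst x; case: (eqVneq y u) => [Eyu|yu]).
- subst y; rewrite (eq_expect _ (G := fun S => (S u == S v)%:R)); last first.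
    by move=> S; rewrite eq_sym sq.
  rewrite expect_pair //; rewrite_neqs; ring.
- rewrite (eq_expect _ (G := fun S => (S v == S u)%:R * (S v == S y)%:R)); last first.
    by move=> S; rewrite eq_sym.
  rewrite expect_path; last by rewrite /= !inE !negb_or; rewrite_neqs.
  rewrite_neqs; ring.
case: (eqVneq y u) => [Eyu|yu].
  subst y; rewrite (eq_expect _ (G := fun S => (S u == S v)%:R * (S u == S x)%:R)); last first.
    by move=> S; rewrite (eq_sym (S x)).
  rewrite expect_path; last by rewrite /= !inE !negb_or; rewrite_neqs.
  rewrite_neqs; ring.
case: (eqVneq y v) => [Eyv|yv].
  subst y; rewrite (eq_expect _ (G := fun S => (S v == S u)%:R * (S v == S x)%:R)); last first.
    by move=> S; rewrite (eq_sym (S u)) (eq_sym (S x)).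
  rewrite expect_path; last by rewrite /= !inE !negb_or; rewrite_neqs.
  rewrite_neqs; ring.
rewrite expect_disjoint; last by rewrite /= !inE !negb_or; rewrite_neqs.
rewrite_neqs; ring.
Qed.

End CollisionMoments.

Section GraphCounting.
Variables (V : finType) (e : rel V).
Hypotheses (e_irr : irreflexive e) (e_sym : symmetric e).

Lemma edge_neq u v : e u v -> u != v.
Proof. by apply: contraTneq => ->; rewrite e_irr. Qed.

Lemma set2_eq (u v a b : V) : u != v ->
  ([set u; v] == [set a; b]) = ((u, v) == (a, b)) || ((u, v) == (b, a)).
Proof.
move=> uv; apply/idP/idP; last by case/orP => /eqP [-> ->] //; rewrite setUC.
move/eqP=> uv_ab.
have : u \in [set a; b] by rewrite -uv_ab set21.
have : v \in [set a; b] by rewrite -uv_ab set22.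
rewrite !in_set2 => vab uab; move: uab vab uv.
by move=> /orP[/eqP->|/eqP->] /orP[/eqP->|/eqP->]; rewrite ?eqxx ?orbT.
Qed.

(* Each edge satisfying [Q] is counted twice among the ordered pairs
   (u, v) with [e u v]. *)
Lemma card_ordered_pairs (Q : {set V} -> bool) :
  (#|[set A in edges e | Q A]| * 2)%N =
  #|[set p : V * V | e p.1 p.2 && Q [set p.1; p.2]]|.
Proof.
symmetry; rewrite -sum1_card (partition_big (fun p : V * V => [set p.1; p.2])
   (fun A => A \in [set A in edges e | Q A])); last first.
  move=> [u v]; rewrite !inE /= => /andP[euv ->]; rewrite andbT.
  by apply/existsP; exists u; apply/existsP; exists v; rewrite euv eqxx.
rewrite -sum_nat_const; apply: eq_bigr => A.
rewrite !inE => /andP[/existsP[a /existsP[b /andP[eab /eqP ->]]] QA].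
have ab := edge_neq eab.
rewrite sum1_card -(_ : #|[set (a, b); (b, a)]| = 2%N); last first.
  by rewrite cards2; case: eqP => // -[ab_eq _]; move: ab; rewrite ab_eq eqxx.
apply: eq_card => -[u v]; rewrite unfold_in /= !inE /=.
apply/idP/idP => [/andP[/andP[euv _]]|].
  by rewrite set2_eq // edge_neq.
case/orP => /eqP[-> ->]; rewrite ?eqxx ?QA ?eab ?andbT //.
by rewrite e_sym eab setUC QA eqxx.
Qed.

End GraphCounting.

Section GraphSums.
Variables (R : comNzRingType) (V : finType) (e : rel V).
Hypotheses (e_irr : irreflexive e) (e_sym : symmetric e).

Definition adj (u v : V) : R := (e u v)%:R.

Lemma adj_sym u v : adj u v = adj v u.
Proof. by rewrite /adj e_sym. Qed.

Lemma adj_sq u v : adj u v * adj u v = adj u v.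
Proof. by rewrite /adj -natrM mulnb andbb. Qed.

Lemma card_rel (f : V -> V -> bool) :
  (#|[set p : V * V | f p.1 p.2]|)%:R = \sum_u \sum_v ((f u v)%:R : R).
Proof.
rewrite (pair_bigA _ (fun u v => ((f u v)%:R : R))) -sum1_card natr_sum big_mkcond.
by apply: eq_bigr => -[u v] _; rewrite inE /=; case: (f u v).
Qed.

Lemma sum_adj : \sum_u \sum_v adj u v = 2 * #|edges e|%:R.
Proof.
have := card_ordered_pairs e_irr e_sym (fun _ => true).
have -> : [set A in edges e | true] = edges e by apply/setP => A; rewrite inE andbT.
move/(congr1 (fun m => (m%:R : R))); rewrite natrM mulrC => ->.
rewrite (card_rel (fun u v => e u v && true)).
by apply: eq_bigr => u _; apply: eq_bigr => v _; rewrite andbT.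
Qed.

Definition ordered_collisions (n : nat) (S : {ffun V -> 'I_n}) : R :=
  \sum_u \sum_v adj u v * (S u == S v)%:R.

Lemma ordered_collisionsE (n : nat) (S : {ffun V -> 'I_n}) :
  ordered_collisions S = 2 * (collisions e S)%:R.
Proof.
have := card_ordered_pairs e_irr e_sym
  (fun A => [forall u in A, forall v in A, S u == S v]).
move/(congr1 (fun m => (m%:R : R))); rewrite natrM mulrC => ->.
rewrite (card_rel (fun u v =>
  e u v && [forall x in [set u; v], forall y in [set u; v], S x == S y])).
apply: eq_bigr => u _; apply: eq_bigr => v _.
rewrite /adj -natrM mulnb; congr (e u v && _)%:R.
apply/eqP/idP => [SuSv|]; last first.
  by move=> /forall_inP/(_ u (set21 _ _))/forall_inP/(_ v (set22 _ _))/eqP.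
apply/forall_inP => x; rewrite in_set2 => /orP[]/eqP->;
  by apply/forall_inP => y; rewrite in_set2 => /orP[]/eqP->; rewrite ?SuSv.
Qed.

Lemma cG_paths :
  (cG e)%:R = \sum_a \sum_b \sum_c adj a b * adj b c * (a != c)%:R :> R.
Proof.
rewrite (pair_bigA _ (fun a b => \sum_c adj a b * adj b c * (a != c)%:R)).
rewrite (pair_bigA _ (fun ab c => adj ab.1 ab.2 * adj ab.2 c * (ab.1 != c)%:R)).
rewrite /cG -sum1_card natr_sum big_mkcond; apply: eq_bigr => -[[a b] c] _.
rewrite inE /= /adj -!natrM !mulnb.
by case eab: (e a b); case ebc: (e b c); rewrite ?andbF //=
  (edge_neq e_irr eab) (edge_neq e_irr ebc) andbT; case: (a != c).
Qed.

End GraphSums.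

Arguments adj_sym {R V e} e_sym u v.

Section FourfoldSums.
Variables (R : nzRingType) (V : finType).

Definition sum4 (h : V -> V -> V -> V -> R) : R :=
  \sum_u \sum_v \sum_x \sum_y h u v x y.

Lemma eq_sum4 h1 h2 : (forall u v x y, h1 u v x y = h2 u v x y) -> sum4 h1 = sum4 h2.
Proof.
move=> h12; apply: eq_bigr => u _; apply: eq_bigr => v _; apply: eq_bigr => x _.
by apply: eq_bigr => y _.
Qed.

Lemma sum4D h1 h2 : sum4 (fun u v x y => h1 u v x y + h2 u v x y) = sum4 h1 + sum4 h2.
Proof.
rewrite /sum4 -big_split; apply: eq_bigr => u _; rewrite -big_split.
by apply: eq_bigr => v _; rewrite -big_split; apply: eq_bigr => x _; rewrite -big_split.
Qed.

Lemma sum4Z c h : sum4 (fun u v x y => c * h u v x y) = c * sum4 h.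
Proof.
rewrite /sum4 mulr_sumr; apply: eq_bigr => u _; rewrite mulr_sumr.
by apply: eq_bigr => v _; rewrite mulr_sumr; apply: eq_bigr => x _; rewrite mulr_sumr.
Qed.

Lemma sum4B h1 h2 : sum4 h1 - sum4 h2 = sum4 (fun u v x y => h1 u v x y - h2 u v x y).
Proof.
rewrite /sum4 -sumrB; apply: eq_bigr => u _; rewrite -sumrB.
by apply: eq_bigr => v _; rewrite -sumrB; apply: eq_bigr => x _; rewrite -sumrB.
Qed.

Lemma sum4_swap12 h : sum4 h = sum4 (fun u v x y => h v u x y).
Proof. exact: exchange_big. Qed.

Lemma sum4_swap34 h : sum4 h = sum4 (fun u v x y => h u v y x).
Proof. by apply: eq_bigr => u _; apply: eq_bigr => v _; exact: exchange_big. Qed.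

End FourfoldSums.

Section CollisionVariance.
Variables (R : realType) (V : finType) (e : rel V) (n : nat) (P : {ffun 'I_n -> R}).
Hypotheses (P_sum1 : \sum_i P i = 1) (e_irr : irreflexive e) (e_sym : symmetric e).
Local Notation expect := (@expect R V n P).
Local Notation adj := (@adj R V e).
Local Notation Y := (@ordered_collisions R V e n).
Local Notation mu := (muP P).
Local Notation gamma := (gammaP P).

Definition paths2 : R := \sum_a \sum_b \sum_c adj a b * adj b c * (a != c)%:R.

Lemma expect_ordered_collisions : expect Y = (\sum_u \sum_v adj u v) * mu.
Proof.
rewrite expect_sum mulr_suml; apply: eq_bigr => u _.
rewrite expect_sum mulr_suml; apply: eq_bigr => v _; rewrite expectZ.
by case euv: (e u v); rewrite /adj euv ?mul0r // expect_pair // (edge_neq e_irr euv).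
Qed.

Lemma var_ordered_collisions :
  expect (fun S => Y S ^+ 2) - ((\sum_u \sum_v adj u v) * mu) ^+ 2 =
  sum4 (fun u v x y => adj u v * adj x y * edge_cov P u v x y).
Proof.
have -> : expect (fun S => Y S ^+ 2) =
    sum4 (fun u v x y =>
      adj u v * adj x y * expect (fun S => (S u == S v)%:R * (S x == S y)%:R)).
  rewrite (eq_expect _ (G := fun S => \sum_u \sum_v \sum_x \sum_y
      adj u v * adj x y * ((S u == S v)%:R * (S x == S y)%:R))); last first.
    move=> S; rewrite /ordered_collisions expr2 mulr_suml; apply: eq_bigr => u _.
    rewrite mulr_suml; apply: eq_bigr => v _; rewrite mulr_sumr; apply: eq_bigr => x _.
    by rewrite mulr_sumr; apply: eq_bigr => y _; ring.
  rewrite expect_sum; apply: eq_bigr => u _; rewrite expect_sum; apply: eq_bigr => v _.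
  rewrite expect_sum; apply: eq_bigr => x _; rewrite expect_sum.
  by apply: eq_bigr => y _; rewrite expectZ.
have -> : ((\sum_u \sum_v adj u v) * mu) ^+ 2 =
    sum4 (fun u v x y => adj u v * adj x y * mu ^+ 2).
  rewrite exprMn expr2 !mulr_suml; apply: eq_bigr => u _; rewrite !mulr_suml.
  apply: eq_bigr => v _; rewrite mulr_sumr mulr_suml; apply: eq_bigr => x _.
  by rewrite mulr_sumr mulr_suml; apply: eq_bigr => y _; ring.
by rewrite sum4B; apply: eq_sum4 => u v x y; rewrite /edge_cov mulrBr.
Qed.

Lemma sum4_same_edge :
  sum4 (fun u v x y => adj u v * adj x y * ((x == u)%:R * (y == v)%:R)) =
  \sum_u \sum_v adj u v.
Proof.
apply: eq_bigr => u _; apply: eq_bigr => v _.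
rewrite (big_only1 u) // => [|x /negbTE xu _]; last first.
  by rewrite big1 // => y _; rewrite xu mul0r mulr0.
rewrite (big_only1 v) // => [|y /negbTE yv _]; last by rewrite yv !mulr0.
by rewrite !eqxx /= mulr1n !mulr1 adj_sq.
Qed.

Lemma sum4_shared_vertex :
  sum4 (fun u v x y => adj u v * adj x y * ((x == u)%:R * (y != v)%:R)) = paths2.
Proof.
transitivity (\sum_u \sum_v \sum_y adj u v * adj u y * (y != v)%:R).
  apply: eq_bigr => u _; apply: eq_bigr => v _.
  rewrite (big_only1 u) // => [|x /negbTE xu _]; last first.
    by apply: big1 => y _; rewrite xu mul0r mulr0.
  by apply: eq_bigr => y _; rewrite eqxx mul1r.
rewrite exchange_big; apply: eq_bigr => v _; apply: eq_bigr => u _; apply: eq_bigr => y _.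
by rewrite (adj_sym e_sym u v) (eq_sym y v).
Qed.

Lemma adj_edge_cov u v x y :
  adj u v * adj x y * edge_cov P u v x y =
  (mu - mu ^+ 2) * (adj u v * adj x y * ((x == u)%:R * (y == v)%:R)) +
  (mu - mu ^+ 2) * (adj u v * adj x y * ((x == v)%:R * (y == u)%:R)) +
  ((gamma - mu ^+ 2) * (adj u v * adj x y * ((x == u)%:R * (y != v)%:R)) +
   (gamma - mu ^+ 2) * (adj u v * adj x y * ((x == v)%:R * (y != u)%:R)) +
   (gamma - mu ^+ 2) * (adj u v * adj x y * ((y == u)%:R * (x != v)%:R)) +
   (gamma - mu ^+ 2) * (adj u v * adj x y * ((y == v)%:R * (x != u)%:R))).
Proof.
rewrite /adj; case euv: (e u v); case exy: (e x y); rewrite /= ?mulr1n ?mulr0n; try ring.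
by rewrite edge_cov_formula // ?(edge_neq e_irr euv) ?(edge_neq e_irr exy) //; ring.
Qed.

(* Summing the covariances: 2|E| ordered pairs meet themselves (twice, as
   (u,v) and (v,u)) and each path of length two arises four times. *)
Lemma sum4_cov :
  sum4 (fun u v x y => adj u v * adj x y * edge_cov P u v x y) =
  2 * (\sum_u \sum_v adj u v) * (mu - mu ^+ 2) + 4 * paths2 * (gamma - mu ^+ 2).
Proof.
(* the remaining overlap patterns are images of the two basic ones under
   the symmetries u <-> v and x <-> y *)
have same' : sum4 (fun u v x y => adj u v * adj x y * ((x == v)%:R * (y == u)%:R)) =
    \sum_u \sum_v adj u v.
  rewrite sum4_swap12 -sum4_same_edge; apply: eq_sum4 => u v x y.
  by rewrite (adj_sym e_sym v u).
have shared2 :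
    sum4 (fun u v x y => adj u v * adj x y * ((x == v)%:R * (y != u)%:R)) = paths2.
  rewrite sum4_swap12 -sum4_shared_vertex; apply: eq_sum4 => u v x y.
  by rewrite (adj_sym e_sym v u).
have shared3 :
    sum4 (fun u v x y => adj u v * adj x y * ((y == u)%:R * (x != v)%:R)) = paths2.
  rewrite sum4_swap34 -sum4_shared_vertex; apply: eq_sum4 => u v x y.
  by rewrite (adj_sym e_sym y x).
have shared4 :
    sum4 (fun u v x y => adj u v * adj x y * ((y == v)%:R * (x != u)%:R)) = paths2.
  rewrite sum4_swap12 sum4_swap34 -sum4_shared_vertex; apply: eq_sum4 => u v x y.
  by rewrite (adj_sym e_sym v u) (adj_sym e_sym y x).
rewrite (eq_sum4 adj_edge_cov) !sum4D !sum4Z sum4_same_edge same'.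
rewrite sum4_shared_vertex shared2 shared3 shared4.
ring.
Qed.

Lemma collisions_sq_dev :
  expect (fun S => ((collisions e S)%:R - #|edges e|%:R * mu) ^+ 2) =
  #|edges e|%:R * (mu - mu ^+ 2) + (cG e)%:R * (gamma - mu ^+ 2).
Proof.
set E := #|edges e|%:R; set m := E * mu.
have mean : expect Y = 2 * m by rewrite expect_ordered_collisions sum_adj // /m mulrA.
have var : expect (fun S => Y S ^+ 2) =
    (2 * m) ^+ 2 + (4 * E * (mu - mu ^+ 2) + 4 * (cG e)%:R * (gamma - mu ^+ 2)).
  rewrite -[LHS](subrK (((\sum_u \sum_v adj u v) * mu) ^+ 2)) var_ordered_collisions //.
  by rewrite sum4_cov sum_adj // (cG_paths R e_irr) /paths2 /m; ring.
transitivity (expect (fun S => 4^-1 * Y S ^+ 2 + ((- m) * Y S + m ^+ 2))).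
  by apply: eq_expect => S; rewrite ordered_collisionsE //; field.
by rewrite !expectD !expectZ expect_cst // var mean /m; field.
Qed.

End CollisionVariance.

(* Cauchy-Schwarz between the l1 and l2 norms on R^n: expanding
   0 <= sum_i (|f i| - L/n)^2 with L = sum_i |f i|. *)
Lemma l1_sq_le (R : realFieldType) (n : nat) (f : 'I_n -> R) : (0 < n)%N ->
  (\sum_i `|f i|) ^+ 2 <= n%:R * \sum_i f i ^+ 2.
Proof.
move=> n_gt0; set L := \sum_i `|f i|; set ni : R := n%:R^-1.
have nni : n%:R * ni = 1 by rewrite mulfV // pnatr_eq0 -lt0n.
have n0 : (0 : R) < n%:R by rewrite ltr0n.
have : 0 <= \sum_i (`|f i| - L * ni) ^+ 2 by apply: sumr_ge0 => i _; exact: sqr_ge0.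
have -> : \sum_i (`|f i| - L * ni) ^+ 2 = \sum_i f i ^+ 2 - L ^+ 2 * ni.
  transitivity (\sum_i (f i ^+ 2 + (- 2 * L * ni) * `|f i| + L * L * (ni * ni))).
    by apply: eq_bigr => i _; rewrite -(real_normK (num_real (f i))); ring.
  rewrite !big_split /= -mulr_sumr sumr_const card_ord -/L -[_ *+ n]mulr_natl.
  have -> : n%:R * (L * L * (ni * ni)) = L * L * ni * (n%:R * ni) by ring.
  by rewrite nni; ring.
nra.
Qed.

Section DistanceToUniform.
Variables (R : realType) (n : nat) (P : {ffun 'I_n -> R}).
Hypotheses (n_gt0 : (0 < n)%N) (P_sum1 : \sum_i P i = 1).

Let ni : R := n%:R^-1.

Definition l2_dist2 : R := \sum_i (P i - ni) ^+ 2.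
Local Notation del := l2_dist2.

Lemma natr_mulV : n%:R * ni = 1.
Proof. by rewrite mulfV // pnatr_eq0 -lt0n. Qed.

Lemma sum_deviation : \sum_i (P i - ni) = 0.
Proof.
by rewrite sumrB P_sum1 sumr_const card_ord -mulr_natl natr_mulV subrr.
Qed.

Lemma muP_uniform : muP P = ni + del.
Proof.
have -> : del = \sum_i (P i ^+ 2 - 2 * ni * P i + ni * ni).
  by apply: eq_bigr => i _; ring.
rewrite !big_split /= sumrN -mulr_sumr P_sum1 sumr_const card_ord.
rewrite -[_ *+ n]mulr_natl mulrCA natr_mulV /muP; ring.
Qed.

(* Each deviation is at most the l2 distance, so the cubic deviation sum is
   at most del^(3/2). *)
Lemma sum_deviation_cube : \sum_i (P i - ni) ^+ 3 <= Num.sqrt del * del.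
Proof.
rewrite /del mulr_sumr; apply: ler_sum => i _; rewrite exprS.
apply: ler_wpM2r; first exact: sqr_ge0.
apply: le_trans (ler_norm _) _; rewrite -sqrtr_sqr; apply: ler_wsqrtr.
by rewrite (bigD1 i) //= lerDl sumr_ge0 // => j _; exact: sqr_ge0.
Qed.

Lemma gammaP_excess : gammaP P - muP P ^+ 2 <= del * (ni + Num.sqrt del).
Proof.
have -> : gammaP P = \sum_i (ni ^+ 3 + 3 * ni ^+ 2 * (P i - ni)
                          + 3 * ni * (P i - ni) ^+ 2 + (P i - ni) ^+ 3).
  by apply: eq_bigr => i _; ring.
rewrite !big_split /= -!mulr_sumr sum_deviation -/del sumr_const card_ord.
rewrite -[_ *+ n]mulr_natl muP_uniform.
have := sum_deviation_cube; have := sqr_ge0 del; have := natr_mulV.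
set C := \sum_i _; set s := Num.sqrt del; move=> nni d2 Cs.
rewrite nni mulr1; nra.
Qed.

Lemma dist_unif_sq : dist_unif P ^+ 2 <= n%:R * del.
Proof. exact: l1_sq_le. Qed.

End DistanceToUniform.

Section Arithmetic.
Variable R : realFieldType.

Lemma le_mulV_of_le_mul (x nr ni del : R) :
  0 <= ni -> nr * ni = 1 -> x <= nr * del -> x * ni <= del.
Proof.
move=> ni0 nni x_le; have -> : del = nr * del * ni by rewrite mulrAC nni mul1r.
by rewrite ler_wpM2r.
Qed.

Lemma mean_gap (E tau eps ni del : R) :
  0 <= E -> 0 <= tau -> eps ^+ 2 * ni <= del ->
  E * (1 - tau) * del <= E * (ni + del) - E * (1 + tau * eps ^+ 2) * ni.
Proof.
move=> E0 tau0 eps_del; rewrite -subr_ge0 in eps_del.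
have := mulr_ge0 (mulr_ge0 E0 tau0) eps_del; lra.
Qed.

(* With r = sqrt n and s = sqrt del, the bound eps^2 <= n del gives
   eps^2 (1/n + sqrt del) <= 2 sqrt n del. *)
Lemma eps_sq_scale (eps nr ni r s del : R) :
  0 < eps -> eps <= 1 -> 1 <= nr -> nr * ni = 1 -> 0 <= r -> r ^+ 2 = nr ->
  0 <= s -> s ^+ 2 = del -> eps ^+ 2 <= nr * del ->
  eps ^+ 2 * (ni + s) <= 2 * r * del.
Proof.
move=> eps0 eps1 nr1 nni r0 rr s0 ss eps_del.
have ni0 : 0 < ni by nra.
have r1 : 1 <= r by nra.
have eps_ni := le_mulV_of_le_mul (ltW ni0) nni eps_del.
have eps_rs : eps <= r * s.
  have rs_sq : (r * s) ^+ 2 = nr * del by rewrite exprMn rr ss.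
  have rs0 := mulr_ge0 r0 s0; rewrite leNgt; apply/negP => rs_eps; nra.
have eps_s : eps ^+ 2 * s <= eps * s.
  have one_eps : 0 <= 1 - eps by rewrite subr_ge0.
  have := mulr_ge0 (mulr_ge0 (ltW eps0) s0) one_eps.
  rewrite expr2; lra.
nra.
Qed.

Lemma sq_dev_bound (a c g E tau eps r s del ni : R) :
  0 < r -> 0 <= c -> 0 <= del -> 0 <= ni -> 0 <= s ->
  a < c * g -> g <= del * (ni + s) ->
  c <= E ^+ 2 * (1 - tau) ^+ 2 * eps ^+ 2 / (16 * r) ->
  eps ^+ 2 * (ni + s) <= 2 * r * del ->
  a + c * g <= (E * (1 - tau) * del) ^+ 2 / 4.
Proof.
move=> r0 c0 del0 ni0 s0 a_cg g_le c_le eps_le.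
set K := E ^+ 2 * (1 - tau) ^+ 2.
have K0 : 0 <= K by rewrite /K mulr_ge0 ?sqr_ge0.
have cg : c * g <= K * eps ^+ 2 / (16 * r) * (del * (ni + s)).
  apply: le_trans (ler_wpM2l c0 g_le) _.
  by rewrite ler_wpM2r ?mulr_ge0 ?addr_ge0.
have : K * eps ^+ 2 / (16 * r) * (del * (ni + s)) <= K * del ^+ 2 / 8.
  have -> : K * eps ^+ 2 / (16 * r) * (del * (ni + s)) =
      K * del / (16 * r) * (eps ^+ 2 * (ni + s)) by field; lra.
  have w0 : 0 <= K * del / (16 * r) by apply: divr_ge0; [exact: mulr_ge0 | lra].
  have -> : K * del ^+ 2 / 8 = K * del / (16 * r) * (2 * r * del) by field; lra.
  by rewrite ler_wpM2l.
have -> : (E * (1 - tau) * del) ^+ 2 = K * del ^+ 2 by rewrite /K; ring.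
lra.
Qed.

Lemma chebyshev_ratio_le_quarter (dev m t gap : R) :
  0 < gap -> gap <= m - t -> dev <= gap ^+ 2 / 4 -> dev / (m - t) ^+ 2 <= 4^-1.
Proof.
move=> gap_gt0 gap_le dev_le.
have mt_gt0 : 0 < m - t by exact: lt_le_trans gap_le.
rewrite ler_pdivrMr ?exprn_gt0 //; nra.
Qed.

End Arithmetic.

Theorem lemma11 (R : realType) (n : nat) (eps tau : R)
  (V : finType) (e : rel V) (P : {ffun 'I_n -> R}) :
  (0 < n)%N ->
  0 < eps -> eps <= 1 ->
  0 <= tau -> tau < 1 ->
  simple_graph e ->
  (1 <= #|edges e|)%N ->
  is_distr P ->
  eps <= dist_unif P ->
  #|edges e|%:R * (muP P - muP P ^+ 2) < (cG e)%:R * (gammaP P - muP P ^+ 2) ->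
  (cG e)%:R <= #|edges e|%:R ^+ 2 * (1 - tau) ^+ 2 * eps ^+ 2
                 / (16 * Num.sqrt n%:R) ->
  prob_yes e P tau eps <= 4^-1.
Proof.
move=> n_gt0 eps_gt0 eps_le1 tau_ge0 tau_lt1 [e_irr e_sym] E_ge1 [P_ge0 P_sum1]
  eps_dist cov_dominant cG_small.
set del := l2_dist2 P.
have nni := natr_mulV R n_gt0.
have n_ge1 : 1 <= n%:R :> R by rewrite ler1n.
have del_ge0 : 0 <= del by apply: sumr_ge0 => i _; exact: sqr_ge0.
(* P is eps-far from uniform in l1, hence eps^2 <= n del *)
have eps_del : eps ^+ 2 <= n%:R * del.
  apply: le_trans (dist_unif_sq P n_gt0); nra.
have ni_ge0 : 0 <= n%:R^-1 :> R by rewrite invr_ge0 ler0n.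
have eps_ni := le_mulV_of_le_mul ni_ge0 nni eps_del.
have gap := mean_gap (ler0n R #|edges e|) tau_ge0 eps_ni.
rewrite -(muP_uniform n_gt0 P_sum1) in gap.
have del_gt0 : 0 < del.
  by apply: lt_le_trans eps_ni; rewrite divr_gt0 ?exprn_gt0 ?ltr0n.
have gap_gt0 : 0 < #|edges e|%:R * (1 - tau) * del.
  by rewrite !mulr_gt0 ?subr_gt0 // ltr0n.
have T_lt_mean : threshold e n tau eps < #|edges e|%:R * muP P.
  by rewrite -subr_gt0 (lt_le_trans gap_gt0 gap).
have scale := eps_sq_scale eps_gt0 eps_le1 n_ge1 nni (sqrtr_ge0 _)
  (sqr_sqrtr (ler0n _ n)) (sqrtr_ge0 del) (sqr_sqrtr del_ge0) eps_del.
have sqrt_n_gt0 : 0 < Num.sqrt n%:R :> R by rewrite sqrtr_gt0 ltr0n.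
have dev := sq_dev_bound sqrt_n_gt0 (ler0n _ _) del_ge0 ni_ge0 (sqrtr_ge0 del)
  cov_dominant (gammaP_excess n_gt0 P_sum1) cG_small scale.
apply: le_trans (chebyshev_lower_tail P_ge0 (fun S => (collisions e S)%:R) T_lt_mean) _.
by rewrite collisions_sq_dev //; exact: chebyshev_ratio_le_quarter gap_gt0 gap dev.
Qed.
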